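(* Let $A$ be an event and $X,Y$ random variables with discrete distributions such that $X=P(A\mid X)$ and $Y=P(A\mid Y)$. Fix $0<\delta<\tfrac12$, and suppose that for each possible value $(x,y)$ of $(X,Y)$ (i.e. $P(X=x,Y=y)>0$) with $|y-x|\ge1-\delta$ there is no other such possible value $(x',y')$ with $|y'-x'|\ge 1-\delta$ and either $x'=x$ or $y'=y$. Then $$P(|Y-X|\ge1-\delta)\le\frac{2\delta}{1+\delta}.$$ *)

From HB Require Import structures.
From mathcomp Require Import all_boot all_order all_algebra.
From mathcomp Require Import all_classical all_reals all_analysis.
Set Implicit Arguments. Unset Strict Implicit. Unset Printing Implicit Defensive.
Import Order.TTheory GRing.Theory Num.Theory.
Local Open Scope classical_set_scope.
Local Open Scope ring_scope.

Definition discrete_rv d (T : measurableType d) (R : realType)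
  (P : probability T R) (X : T -> R) : Prop :=
  exists S : set R, countable S /\ P (X @^-1` S) = 1%E.

(* X = P(A | X) for a discretely distributed X: on every atom {X = x} of
   positive probability, P(A | X = x) = x, i.e.
   P(A /\ X = x) = x * P(X = x).  (The event {X = x} with P(X=x) = 0 is
   negligible, since X is discrete.) *)
Definition is_cond_prob_of d (T : measurableType d) (R : realType)
  (P : probability T R) (A : set T) (X : T -> R) : Prop :=
  forall x : R, (0 < P (X @^-1` [set x]))%E ->
    P (A `&` X @^-1` [set x]) = (x%:E * P (X @^-1` [set x]))%E.

From HB Require Import structures.
From mathcomp Require Import all_boot all_order all_algebra.
From mathcomp Require Import all_classical all_reals all_analysis.
From mathcomp Require Import lra.
Set Implicit Arguments. Unset Strict Implicit. Unset Printing Implicit Defensive.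
Import Order.TTheory GRing.Theory Num.Theory.
Local Open Scope classical_set_scope.
Local Open Scope ring_scope.

(* For a possible value (x, y) write m, a, b for the masses of {X = x, Y = y},
   {X = x} and {Y = y}.  The atom lies in (A /\ {X = x}) \/ (~A /\ {Y = y}),
   whence m <= x a + (1 - y) b, and likewise m <= (1 - x) a + y b using ~A.
   When |y - x| >= 1 - delta one of the weight pairs sums to at most delta,
   which forces (1 + delta) m <= delta (a + b).  By the uniqueness hypothesis
   the far atoms of positive mass sit in pairwise distinct atoms of X and of Y,
   so summing over them gives (1 + delta) P(|Y - X| >= 1 - delta) <= 2 delta. *)

Lemma mass_le_of_split (R : realFieldType) (delta u v m a b : R) :
  0 <= u -> 0 <= v -> u + v <= delta -> 0 <= m -> m <= a -> m <= b ->
  m <= u * a + v * b -> m <= delta / (1 + delta) * (a + b).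
Proof.
move=> u0 v0 uv m0 ma mb muv.
(* m <= u a + v b = (u + v) m + u (a - m) + v (b - m) <= delta (a + b - m) *)
have ua : u * (a - m) <= delta * (a - m) by apply: ler_wpM2r; lra.
have vb : v * (b - m) <= delta * (b - m) by apply: ler_wpM2r; lra.
have uvm : (u + v) * m <= delta * m by exact: ler_wpM2r.
rewrite mulrAC ler_pdivlMr; lra.
Qed.

Section preimage.
Context d (T : measurableType d) (R : realType).

Lemma measurable_preimage (f : T -> R) (S : set R) :
  measurable_fun setT f -> measurable S -> measurable (f @^-1` S).
Proof. by move=> mf mS; rewrite -[_ @^-1` _]setTI; exact: mf. Qed.

Lemma measurable_preimage_countable (f : T -> R) (S : set R) :
  measurable_fun setT f -> countable S -> measurable (f @^-1` S).
Proof.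
by move=> mf cS; apply: measurable_preimage => //; exact: countable_measurable.
Qed.

End preimage.

Section conditional_probability.
Context d (T : measurableType d) (R : realType) (P : probability T R).
Variables (B : set T) (Z : T -> R).
Hypotheses (mB : measurable B) (mZ : measurable_fun setT Z)
  (cZ : is_cond_prob_of P B Z).

Let mZ1 z : measurable (Z @^-1` [set z]).
Proof. exact: measurable_preimage. Qed.

Lemma cond_prob_itv z : (0 < P (Z @^-1` [set z]))%E -> 0 <= z <= 1.
Proof.
move=> Pz; have mBZ := measurableI _ _ mB (mZ1 z).
have finZ := fin_num_measure P _ (mZ1 z).
have finBZ := fin_num_measure P _ mBZ.
have BZ_le : fine (P (B `&` Z @^-1` [set z])) <= fine (P (Z @^-1` [set z])).
  by apply: fine_le => //; apply: le_measure; rewrite ?inE.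
have BZ_ge0 : 0 <= fine (P (B `&` Z @^-1` [set z])) by exact: fine_ge0.
have Z_gt0 : 0 < fine (P (Z @^-1` [set z])) by rewrite -lte_fin fineK.
move: (cZ Pz) BZ_le BZ_ge0 Z_gt0.
rewrite -[in RHS](fineK finZ) -[in LHS](fineK finBZ) => -[->].
move: (fine (P (Z @^-1` [set z]))) => p zp_le zp_ge0 p_gt0.
by rewrite -(pmulr_lge0 _ p_gt0) zp_ge0 -(ler_pM2r p_gt0) mul1r.
Qed.

Lemma cond_prob_setC z : (0 < P (Z @^-1` [set z]))%E ->
  P (~` B `&` Z @^-1` [set z]) = ((1 - z)%:E * P (Z @^-1` [set z]))%E.
Proof.
move=> Pz; have mCBZ := measurableI _ _ (measurableC mB) (mZ1 z).
have : P (Z @^-1` [set z]) =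
    (P (B `&` Z @^-1` [set z]) + P (~` B `&` Z @^-1` [set z]))%E.
  rewrite -measureU; first by rewrite -setIUl setUv setTI.
  - exact: measurableI.
  - exact: mCBZ.
  - by rewrite setIACA setICr set0I.
rewrite (cZ Pz) -(fineK (fin_num_measure P _ (mZ1 z))).
rewrite -(fineK (fin_num_measure P _ mCBZ)) -!EFinM -EFinD => -[e].
by congr EFin; rewrite mulrBl mul1r; lra.
Qed.

End conditional_probability.

Section series_bound.
Context d (T : measurableType d) (R : realType).

Lemma measure_le_nneseries_cover_null (mu : {measure set T -> \bar R})
    (S N : set T) (F : nat -> set T) :
  measurable S -> measurable N -> (forall n, measurable (F n)) ->
  mu N = 0%E -> S `<=` \bigcup_n F n `|` N ->
  (mu S <= \sum_(n <oo) mu (F n))%E.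
Proof.
move=> mS mN mF N0 SFN.
have SN_le : (mu (S `&` N) <= mu N)%E.
  by apply: le_measure; rewrite ?inE //; exact: measurableI.
have SDN_le : (mu (S `\` N) <= \sum_(n <oo) mu (F n))%E.
  apply: measure_sigma_subadditive mF (measurableD mS mN) _.
  by move=> t [/SFN [|//]].
rewrite (measureDI mu mS mN); apply: le_trans (leeD SDN_le SN_le) _.
by rewrite N0 adde0.
Qed.

Variable P : probability T R.

Lemma probability_setCI_eq0 (S1 S2 : set T) : measurable S1 -> measurable S2 ->
  P S1 = 1%E -> P S2 = 1%E -> P (~` (S1 `&` S2)) = 0%E.
Proof.
move=> mS1 mS2 PS1 PS2; apply/eqP; rewrite eq_le measure_ge0 andbT setCI.
have : (P (~` S1 `|` ~` S2) <= P (~` S1) + P (~` S2))%E.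
  by apply: measureU2; exact: measurableC.
by rewrite !probability_setC // PS1 PS2 subee // adde0.
Qed.

Lemma nneseries_le_trivIset2 (c : R) (E F G : nat -> set T) : 0 <= c ->
  (forall n, measurable (F n)) -> (forall n, measurable (G n)) ->
  trivIset setT F -> trivIset setT G ->
  (forall n, P (E n) <= c%:E * (P (F n) + P (G n)))%E ->
  (\sum_(n <oo) P (E n) <= (2 * c)%:E)%E.
Proof.
move=> c0 mF mG tF tG EFG.
apply: (@le_trans _ _ (\sum_(n <oo) c%:E * (P (F n) + P (G n)))%E).
  by apply: lee_nneseries => [n _ _|n _]; [exact: measure_ge0|exact: EFG].
rewrite nneseriesZl; last by move=> n _; exact: adde_ge0.
rewrite nneseriesD // -!measure_semi_bigcup //; try exact: bigcupT_measurable.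
rewrite mulrC EFinM lee_wpmul2l ?lee_fin //.
have F_le1 := probability_le1 P (bigcupT_measurable _ mF).
have G_le1 := probability_le1 P (bigcupT_measurable _ mG).
by apply: le_trans (leeD F_le1 G_le1) _; rewrite -EFinD.
Qed.

End series_bound.

Section far_values.
Context d (T : measurableType d) (R : realType) (P : probability T R).
Variables (A : set T) (X Y : T -> R) (delta : R) (Sx Sy : set R)
  (f : R * R -> nat).
Hypotheses (mA : measurable A) (mX : measurable_fun setT X)
  (mY : measurable_fun setT Y) (cX : is_cond_prob_of P A X)
  (cY : is_cond_prob_of P A Y) (delta_ge0 : 0 <= delta)
  (cSx : countable Sx) (cSy : countable Sy)
  (f_inj : {in Sx `*` Sy &, injective f})
  (far_uniq : forall x y x' y' : R,
     (0 < P (X @^-1` [set x] `&` Y @^-1` [set y]))%E ->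
     1 - delta <= `|y - x| ->
     (0 < P (X @^-1` [set x'] `&` Y @^-1` [set y']))%E ->
     1 - delta <= `|y' - x'| ->
     (x' = x \/ y' = y) -> x' = x /\ y' = y).

Local Notation atom x y := (X @^-1` [set x] `&` Y @^-1` [set y]).

Let mX1 x : measurable (X @^-1` [set x]). Proof. exact: measurable_preimage. Qed.
Let mY1 y : measurable (Y @^-1` [set y]). Proof. exact: measurable_preimage. Qed.
Let matom x y : measurable (atom x y). Proof. exact: measurableI. Qed.

Lemma atom_le_split (B : set T) x y : measurable B ->
  (P (atom x y) <= P (B `&` X @^-1` [set x]) + P (~` B `&` Y @^-1` [set y]))%E.
Proof.
move=> mB; apply: le_trans (measureU2 _ _ _); last 2 first.
- exact: measurableI.
- by apply: measurableI => //; exact: measurableC.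
apply: le_measure; rewrite ?inE //.
  by apply: measurableU; apply: measurableI => //; exact: measurableC.
by move=> t [Xt Yt]; have [Bt|nBt] := pselect (B t); [left|right].
Qed.

Lemma far_atom_weights x y : 1 - delta <= `|y - x| ->
  (0 < P (X @^-1` [set x]))%E -> (0 < P (Y @^-1` [set y]))%E ->
  exists u v, [/\ 0 <= u, 0 <= v, u + v <= delta &
    (P (atom x y) <= u%:E * P (X @^-1` [set x]) + v%:E * P (Y @^-1` [set y]))%E].
Proof.
move=> far X_gt0 Y_gt0.
have /andP[x0 x1] := cond_prob_itv mA mX cX X_gt0.
have /andP[y0 y1] := cond_prob_itv mA mY cY Y_gt0.
have [xy|yx] := lerP x y.
- exists x, (1 - y); split; [by []|lra| |].
    by move: far; rewrite ger0_norm ?subr_ge0 //; lra.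
  by rewrite -(cX X_gt0) -(cond_prob_setC mA mY cY Y_gt0) atom_le_split.
- exists (1 - x), y; split; [lra|by []| |].
    by move: far; rewrite ltr0_norm ?subr_lt0 //; lra.
  rewrite -(cond_prob_setC mA mX cX X_gt0) -(cY Y_gt0).
  by have := atom_le_split x y (measurableC mA); rewrite setCK.
Qed.

Lemma far_atom_le x y : 1 - delta <= `|y - x| ->
  (P (atom x y) <=
   (delta / (1 + delta))%:E * (P (X @^-1` [set x]) + P (Y @^-1` [set y])))%E.
Proof.
move=> far; have := measure_ge0 P (atom x y).
rewrite le_eqVlt => /predU1P[<-|atom_gt0].
  by rewrite mule_ge0 ?adde_ge0 // lee_fin divr_ge0 // addr_ge0.
have X_gt0 : (0 < P (X @^-1` [set x]))%E.
  by apply: lt_le_trans atom_gt0 _; apply: le_measure; rewrite ?inE.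
have Y_gt0 : (0 < P (Y @^-1` [set y]))%E.
  by apply: lt_le_trans atom_gt0 _; apply: le_measure; rewrite ?inE.
have [u [v [u0 v0 uv]]] := far_atom_weights far X_gt0 Y_gt0.
rewrite -(fineK (fin_num_measure P _ (matom x y))).
rewrite -(fineK (fin_num_measure P _ (mX1 x))).
rewrite -(fineK (fin_num_measure P _ (mY1 y))).
rewrite -!EFinM -EFinD !lee_fin => split_le.
apply: mass_le_of_split u0 v0 uv _ _ _ split_le; first exact: fine_ge0.
- by apply: fine_le; rewrite ?fin_num_measure //; apply: le_measure; rewrite ?inE.
- by apply: fine_le; rewrite ?fin_num_measure //; apply: le_measure; rewrite ?inE.
Qed.

Definition far_pairs n : set (R * R) :=
  [set p | (Sx `*` Sy) p /\ 1 - delta <= `|p.2 - p.1| /\ f p = n].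

Definition likely_far_pairs n : set (R * R) :=
  [set p | far_pairs n p /\ (0 < P (atom p.1 p.2))%E].

(* [far_pairs n] has at most one element, so [far_event n] is the atom of that
   pair (or empty); going through the projections makes it measurable. *)
Definition far_event n : set T :=
  X @^-1` (fst @` far_pairs n) `&` Y @^-1` (snd @` far_pairs n).

Lemma far_pairs_eq n p q : far_pairs n p -> far_pairs n q -> p = q.
Proof.
by move=> [Sp [_ fp]] [Sq [_ fq]]; apply: f_inj; rewrite ?inE // fp fq.
Qed.

Lemma far_event_sub_atom n p : far_pairs n p -> far_event n `<=` atom p.1 p.2.
Proof.
move=> np t [[q nq Xt] [q' nq' Yt]] /=.
by rewrite -Xt -Yt (far_pairs_eq nq np) (far_pairs_eq nq' np).
Qed.

Lemma measurable_far_event n : measurable (far_event n).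
Proof.
apply: measurableI; apply: measurable_preimage_countable => //.
- by apply: sub_countable cSx; apply: subset_card_le => _ [p [[Sxp _] _] <-].
- by apply: sub_countable cSy; apply: subset_card_le => _ [p [[_ Syp] _] <-].
Qed.

Definition likely_far_X n : set T := X @^-1` (fst @` likely_far_pairs n).

Definition likely_far_Y n : set T := Y @^-1` (snd @` likely_far_pairs n).

Lemma likely_far_pairs_index m n p q :
  likely_far_pairs m p -> likely_far_pairs n q -> p.1 = q.1 \/ p.2 = q.2 ->
  m = n.
Proof.
case: p q => [x y] [x' y'] [[_ [far_p <-]] P_p] [[_ [far_q <-]] P_q] /= pq.
suff [-> ->] : x' = x /\ y' = y by [].
by apply: far_uniq P_p far_p P_q far_q _; case: pq => ->; [left|right].
Qed.

Lemma trivIset_likely_far_X : trivIset setT likely_far_X.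
Proof.
move=> m n _ _ [t [[p mp Xp] [q nq Xq]]].
by apply: likely_far_pairs_index mp nq _; left; rewrite Xp Xq.
Qed.

Lemma trivIset_likely_far_Y : trivIset setT likely_far_Y.
Proof.
move=> m n _ _ [t [[p mp Yp] [q nq Yq]]].
by apply: likely_far_pairs_index mp nq _; right; rewrite Yp Yq.
Qed.

Lemma measurable_likely_far_X n : measurable (likely_far_X n).
Proof.
apply: measurable_preimage_countable => //; apply: sub_countable cSx.
by apply: subset_card_le => _ [p [[[Sxp _] _] _] <-].
Qed.

Lemma measurable_likely_far_Y n : measurable (likely_far_Y n).
Proof.
apply: measurable_preimage_countable => //; apply: sub_countable cSy.
by apply: subset_card_le => _ [p [[[_ Syp] _] _] <-].
Qed.

Lemma far_event_le n : (P (far_event n) <=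
  (delta / (1 + delta))%:E * (P (likely_far_X n) + P (likely_far_Y n)))%E.
Proof.
have := measure_ge0 P (far_event n); rewrite le_eqVlt => /predU1P[<-|E_gt0].
  by rewrite mule_ge0 ?adde_ge0 // lee_fin divr_ge0 // addr_ge0.
have /set0P[t [[p np _] _]] : far_event n != set0.
  by apply: contraTneq E_gt0 => ->; rewrite measure0 ltxx.
have E_atom := far_event_sub_atom np.
have E_le_atom : (P (far_event n) <= P (atom p.1 p.2))%E.
  by apply: le_measure E_atom; rewrite inE //; exact: measurable_far_event.
have lp : likely_far_pairs n p by split => //; exact: lt_le_trans E_le_atom.
apply: le_trans E_le_atom _.
apply: le_trans (far_atom_le np.2.1) _.
rewrite lee_wpmul2l ?lee_fin ?divr_ge0 ?addr_ge0 //.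
apply: leeD; apply: le_measure; rewrite ?inE.
- exact: mX1.
- exact: measurable_likely_far_X.
- by move=> s /= Xs; exists p; rewrite ?Xs.
- exact: mY1.
- exact: measurable_likely_far_Y.
- by move=> s /= Ys; exists p; rewrite ?Ys.
Qed.

Lemma far_set_cover : [set t | 1 - delta <= `|Y t - X t|] `<=`
  \bigcup_n far_event n `|` ~` (X @^-1` Sx `&` Y @^-1` Sy).
Proof.
move=> t far_t; have [[Sxt Syt]|] := pselect ((X @^-1` Sx `&` Y @^-1` Sy) t).
  by left; exists (f (X t, Y t)) => //; split; exists (X t, Y t).
by right.
Qed.

Lemma measurable_far_set : measurable [set t | 1 - delta <= `|Y t - X t|].
Proof.
rewrite -[X in measurable X]setTI; apply: measurable_fun_le => //.
by apply: measurableT_comp => //; exact: measurable_realfun.measurable_funB.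
Qed.

End far_values.

Theorem lemma3p3 (d : measure_display) (T : measurableType d) (R : realType)
  (P : probability T R) (A : set T) (X Y : T -> R) (delta : R)
  (mA : measurable A) (mX : measurable_fun setT X) (mY : measurable_fun setT Y)
  (dX : discrete_rv P X) (dY : discrete_rv P Y)
  (cX : is_cond_prob_of P A X) (cY : is_cond_prob_of P A Y)
  (hd0 : 0 < delta) (hd1 : delta < 2^-1)
  (huniq : forall x y x' y' : R,
     (0 < P (X @^-1` [set x] `&` Y @^-1` [set y]))%E ->
     1 - delta <= `|y - x| ->
     (0 < P (X @^-1` [set x'] `&` Y @^-1` [set y']))%E ->
     1 - delta <= `|y' - x'| ->
     (x' = x \/ y' = y) -> x' = x /\ y' = y) :
  (P [set t | (1 - delta <= `|Y t - X t|)%R] <= ((2 * delta / (1 + delta))%R)%:E)%E.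
Proof.
have [Sx [cSx PSx]] := dX; have [Sy [cSy PSy]] := dY.
have /countable_injP[f f_inj] := countableX cSx cSy.
have mSx := measurable_preimage_countable mX cSx.
have mSy := measurable_preimage_countable mY cSy.
have delta_ge0 := ltW hd0.
apply: le_trans (measure_le_nneseries_cover_null
  (measurable_far_set delta mX mY) (measurableC (measurableI _ _ mSx mSy))
  (measurable_far_event delta f mX mY cSx cSy)
  (probability_setCI_eq0 mSx mSy PSx PSy) (far_set_cover Sx Sy f)) _.
rewrite -mulrA.
apply: (nneseries_le_trivIset2 _ _ _ _ _
  (far_event_le mA mX mY cX cY delta_ge0 cSx cSy f_inj)).
- by rewrite divr_ge0 // addr_ge0.
- exact: measurable_likely_far_X.
- exact: measurable_likely_far_Y.
- exact: trivIset_likely_far_X.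
- exact: trivIset_likely_far_Y.
Qed.
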